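(* Let $m\ge2$, $n\ge1$, $k\ge1$ an integer and $\mathcal{A}\in\mathbb{C}^{[m,n]}$. Then (1) $\rho(\mathcal{A}^k)\le(R(\mathcal{A}))^{\mu_k}$; (2) if $\mathcal{A}$ is a nonnegative tensor, then $(r(\mathcal{A}))^{\mu_k}\le\rho(\mathcal{A}^k)\le(R(\mathcal{A}))^{\mu_k}$, where $\mu_k=\frac{(m-1)^k-1}{m-2}$ if $m>2$ and $\mu_k=k$ if $m=2$.
   Context: $[n]=\{1,\ldots,n\}$. $\mathbb{C}^{[m,n]}$ denotes the set of order $m$, dimension $n$ complex tensors. For a tensor $\mathcal{T}=(t_{i_1\cdots i_p})$ of order $p$ and dimension $n$: $r_i(\mathcal{T})=\sum_{i_2,\ldots,i_p=1}^n|t_{ii_2\cdots i_p}|$, $r(\mathcal{T})=\min_{i\in[n]}r_i(\mathcal{T})$, $R(\mathcal{T})=\max_{i\in[n]}r_i(\mathcal{T})$. General product: for $\mathcal{A}=(a_{i_1\cdots i_m})$ of order $m\ge2$ and $\mathcal{B}=(b_{i_1\cdots i_q})$ of order $q\ge1$, $\mathcal{A}\mathcal{B}=(c_{i\alpha_1\cdots\alpha_{m-1}})$ is the order $(m-1)(q-1)+1$, dimension $n$ tensor with $c_{i\alpha_1\cdots\alpha_{m-1}}=\sum_{i_2,\ldots,i_m=1}^n a_{ii_2\cdots i_m}b_{i_2\alpha_1}\cdots b_{i_m\alpha_{m-1}}$, $\alpha_j\in[n]^{q-1}$ (where $b_{j\alpha}$ with $\alpha=(j_2,\ldots,j_q)$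 means $b_{jj_2\cdots j_q}$). Powers: $\mathcal{A}^1=\mathcal{A}$, $\mathcal{A}^{j+1}=\mathcal{A}\mathcal{A}^j$. Eigenvalues of a tensor $\mathcal{T}$ of order $p\ge2$: $\lambda\in\mathbb{C}$ such that there is a nonzero $x\in\mathbb{C}^n$ with $\sum_{i_2,\ldots,i_p=1}^n t_{ii_2\cdots i_p}x_{i_2}\cdots x_{i_p}=\lambda x_i^{p-1}$ for all $i\in[n]$; $\rho(\mathcal{T})$ is the maximum modulus of the eigenvalues. *)

From HB Require Import structures.
From mathcomp Require Import all_boot all_order all_algebra complex.
From mathcomp Require Import reals.
Set Implicit Arguments. Unset Strict Implicit. Unset Printing Implicit Defensive.
Import Order.TTheory GRing.Theory Num.Theory.
Local Open Scope ring_scope.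

(* A tensor of dimension n (of some order p, kept separately) is represented
   by its entry function on index sequences  seq 'I_n -> C; only sequences of
   length p are meaningful.  The entry t_{i1 ... ip} is  T [:: i1; ...; ip]. *)

Definition of_tuple (C : nzRingType) (m n : nat) (A : m.-tuple 'I_n -> C)
  : seq 'I_n -> C :=
  fun s => match insub s with Some t => A t | None => 0 end.

(* General product: A of order m, B of order q; result of order (m-1)(q-1)+1.
   c_{i a_1 ... a_{m-1}} = sum_{i2..im} a_{i i2..im} b_{i2 a_1} ... b_{im a_{m-1}},
   with a_j in [n]^(q-1) (consecutive blocks of length q-1). *)
Definition tmul (C : nzRingType) (n m q : nat) (A B : seq 'I_n -> C)
  : seq 'I_n -> C :=
  fun s => match s with
  | [::] => 0
  | i :: rest =>
      let al := reshape (nseq (m - 1)%N (q - 1)%N) rest in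
      \sum_(t : (m - 1)%N.-tuple 'I_n)
         A (i :: t) * \prod_(j < m - 1) B (tnth t j :: nth [::] al j)
  end.

(* Powers: A^1 = A, A^(j+1) = A A^j; A^j has order (m-1)^j + 1.
   (tpow m A 0 is an unused convention, equal to A.) *)
Fixpoint tpow (C : nzRingType) (n m : nat) (A : seq 'I_n -> C) (k : nat)
  : seq 'I_n -> C :=
  match k with
  | 0 => A
  | k'.+1 => if k' is 0 then A
             else tmul m ((m - 1)%N ^ k' + 1) A (tpow m A k')
  end.

Definition is_eigenvalue (C : nzRingType) (n p : nat) (T : seq 'I_n -> C)
  (l : C) : Prop :=
  exists x : 'I_n -> C, (exists i, x i != 0) /\
    forall i : 'I_n,
      \sum_(t : (p - 1)%N.-tuple 'I_n) T (i :: t) * \prod_(j < p - 1) x (tnth t j)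
      = l * x i ^+ (p - 1)%N.

Definition rowsum (C : numDomainType) (n p : nat) (T : seq 'I_n -> C) (i : 'I_n)
  : C := \sum_(t : (p - 1)%N.-tuple 'I_n) `|T (i :: t)|.

(* R(T) = max_i r_i(T) (all r_i are >= 0, so 0 is a harmless neutral). *)
Definition Rmax (C : numDomainType) (n p : nat) (T : seq 'I_n -> C) : C :=
  \big[Num.max/0]_(i < n) rowsum p T i.

(* r(T) = min_i r_i(T) (for n >= 1; R(T) >= every r_i, so it is neutral). *)
Definition rmin (C : numDomainType) (n p : nat) (T : seq 'I_n -> C) : C :=
  \big[Num.min/Rmax p T]_(i < n) rowsum p T i.

Definition mu (m k : nat) : nat :=
  if m == 2 then k else (((m - 1)%N ^ k - 1) %/ (m - 2))%N.

(* Row sums of a general product satisfy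
   r_i(AB) <= sum_t |a_{i t}| prod_j r_{t_j}(B), with equality for nonnegative
   tensors.  As mu_{k+1} = 1 + (m-1) mu_k, induction on k gives
   r_i(A^k) <= R(A)^{mu_k}, and r(A)^{mu_k} <= r_i(A^k) when A >= 0.  An
   eigenvalue is bounded by the row sum at a coordinate where |x_i| is maximal,
   which proves (1).
   For (2) it remains to find an eigenvalue of a nonnegative tensor T that is at
   least its smallest row sum.  If T is positive, a maximiser of lambda over the
   compact set of pairs (x, lambda) with x in the simplex and
   lambda x_i^(p-1) <= (T x^(p-1))_i is an eigenpair: at a coordinate where the
   inequality is strict, increasing x_i makes every inequality strict, and then
   lambda can be increased.  A nonnegative T is the limit of the positive tensors
   T + e, and the continuous residual |T x^(p-1) - lambda x^[p-1]|, whose infimum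
   over a compact box is 0 by these approximations, vanishes somewhere. *)

From HB Require Import structures.
From mathcomp Require Import all_boot all_order all_algebra complex.
From mathcomp Require Import reals.
From mathcomp Require Import boolp classical_sets topology normedtype derive realfun.
Import Order.TTheory GRing.Theory Num.Theory.
Import numFieldNormedType.Exports.
Set Implicit Arguments. Unset Strict Implicit. Unset Printing Implicit Defensive.
Local Open Scope classical_set_scope.
Local Open Scope ring_scope.

Section TupleSums.
Variables (V : nmodType) (n : nat).
Implicit Type F : seq 'I_n -> V.

Lemma sum_tuple_cast a b (e : a = b) F :
  \sum_(s : a.-tuple 'I_n) F s = \sum_(s : b.-tuple 'I_n) F s.
Proof. by case: b / e. Qed.

Lemma sum_tuple0 F : \sum_(s : 0.-tuple 'I_n) F s = F [::].
Proof. by rewrite (big_pred1 [tuple]) // => t; apply/esym/eqP/val_inj; case: t => -[]. Qed.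

Lemma sum_tuple_cons k F :
  \sum_(s : k.+1.-tuple 'I_n) F s =
  \sum_(x : 'I_n) \sum_(t : k.-tuple 'I_n) F (x :: t).
Proof.
rewrite pair_big (reindex (fun p : 'I_n * k.-tuple 'I_n => [tuple of p.1 :: p.2])) //=.
exists (fun s : k.+1.-tuple 'I_n => (thead s, [tuple of behead s])).
  by move=> [x t] _; congr (_, _); apply: val_inj.
by move=> s _; apply: val_inj; case: s => -[].
Qed.

Lemma sum_tuple_cat a b F :
  \sum_(s : (a + b).-tuple 'I_n) F s =
  \sum_(u : a.-tuple 'I_n) \sum_(v : b.-tuple 'I_n) F (u ++ v).
Proof.
elim: a F => [|a IH] F.
  rewrite (sum_tuple_cast (add0n b)).
  by rewrite (sum_tuple0 (fun u => \sum_(v : b.-tuple 'I_n) F (u ++ v))).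
rewrite (sum_tuple_cast (addSn a b)) sum_tuple_cons.
rewrite (sum_tuple_cons _ (fun u => \sum_(v : b.-tuple 'I_n) F (u ++ v))).
by apply: eq_bigr => x _; rewrite (IH (fun s => F (x :: s))).
Qed.

End TupleSums.

Lemma sum_tuple_prod_reshape (R : comPzSemiRingType) n c b
    (f : 'I_c -> seq 'I_n -> R) :
  \sum_(s : (c * b).-tuple 'I_n)
     \prod_(j < c) f j (nth [::] (reshape (nseq c b) s) j) =
  \prod_(j < c) \sum_(u : b.-tuple 'I_n) f j u.
Proof.
pose G c (f : 'I_c -> seq 'I_n -> R) (s : seq 'I_n) :=
  \prod_(j < c) f j (nth [::] (reshape (nseq c b) s) j).
elim: c f => [|c IH] f.
  by rewrite (sum_tuple_cast (mul0n b) (G 0%N f)) (sum_tuple0 (G 0%N f)) /G !big_ord0.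
rewrite (sum_tuple_cast (mulSn c b) (G _ f)) (sum_tuple_cat _ _ (G _ f)).
rewrite [RHS]big_ord_recl -(IH (fun j => f (lift ord0 j))) mulr_suml.
apply: eq_bigr => u _; rewrite mulr_sumr; apply: eq_bigr => v _.
by rewrite /G big_ord_recl /= take_size_cat ?drop_size_cat ?size_tuple.
Qed.

Lemma sum_tmul (R : comNzRingType) n m q (A B : seq 'I_n -> R) i :
  \sum_(s : ((m - 1) * (q - 1)).-tuple 'I_n) tmul m q A B (i :: s) =
  \sum_(t : (m - 1).-tuple 'I_n)
     A (i :: t) * \prod_(j < m - 1) \sum_(u : (q - 1).-tuple 'I_n) B (tnth t j :: u).
Proof.
rewrite exchange_big; apply: eq_bigr => t _; rewrite -mulr_sumr.
by rewrite (sum_tuple_prod_reshape (q - 1) (fun j u => B (tnth t j :: u))).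
Qed.

Lemma ler_prod_exp (C : numDomainType) d (F : 'I_d -> C) c :
  (forall j, 0 <= F j <= c) -> \prod_j F j <= c ^+ d.
Proof. by move=> Fc; rewrite -[X in c ^+ X]card_ord -prodr_const ler_prod. Qed.

Lemma ler_exp_prod (C : numDomainType) d (F : 'I_d -> C) c :
  0 <= c -> (forall j, c <= F j) -> c ^+ d <= \prod_j F j.
Proof.
by move=> c0 cF; rewrite -[X in c ^+ X]card_ord -prodr_const ler_prod // => j _; rewrite c0 cF.
Qed.

Section RowSums.
Variables (C : numDomainType) (n : nat).
Implicit Types (T A B : seq 'I_n -> C) (p m q : nat).

Lemma rowsum_ge0 p T i : 0 <= rowsum p T i.
Proof. exact: sumr_ge0. Qed.

Lemma rowsum_cast p1 p2 T i : (p1 - 1 = p2 - 1)%N -> rowsum p1 T i = rowsum p2 T i.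
Proof. by move=> e; rewrite /rowsum (sum_tuple_cast e (fun s => `|T (i :: s)|)). Qed.

Lemma rowsum_nneg p T i : (forall s, 0 <= T s) ->
  rowsum p T i = \sum_(t : (p - 1).-tuple 'I_n) T (i :: t).
Proof. by move=> T0; apply: eq_bigr => t _; rewrite ger0_norm. Qed.

Lemma rowsum_le_Rmax p T i : rowsum p T i <= Rmax p T.
Proof.
rewrite /Rmax; elim: (index_enum _) (mem_index_enum i) => // j r IH.
have Mreal : \big[Num.max/0]_(k <- r) rowsum p T k \is Num.real.
  by apply: bigmax_real => // k _; exact/ger0_real/rowsum_ge0.
rewrite inE big_cons comparable_le_max; last first.
  exact: real_comparable (ger0_real (rowsum_ge0 _ _ _)) Mreal.
by case/predU1P => [->|/IH ->]; rewrite ?lexx ?orbT.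
Qed.

Lemma Rmax_ge0 p T : 0 <= Rmax p T.
Proof.
rewrite /Rmax; elim/big_rec: _ => // j M _ M0.
rewrite comparable_le_max ?M0 ?orbT //.
exact: real_comparable (ger0_real (rowsum_ge0 _ _ _)) (ger0_real M0).
Qed.

Lemma rmin_le_rowsum p T i : rmin p T <= rowsum p T i.
Proof.
rewrite /rmin; elim: (index_enum _) (mem_index_enum i) => // j r IH.
have mreal : \big[Num.min/Rmax p T]_(k <- r) rowsum p T k \is Num.real.
  by apply: bigmin_real => [|k _]; rewrite ger0_real ?Rmax_ge0 ?rowsum_ge0.
rewrite inE big_cons comparable_ge_min; last first.
  exact: real_comparable (ger0_real (rowsum_ge0 _ _ _)) mreal.
by case/predU1P => [->|/IH ->]; rewrite ?lexx ?orbT.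
Qed.

Lemma rmin_ge0 p T : 0 <= rmin p T.
Proof. by apply: le_bigmin => [|i _]; [exact: Rmax_ge0 | exact: rowsum_ge0]. Qed.

Lemma tmul_ge0 m q A B : (forall s, 0 <= A s) -> (forall s, 0 <= B s) ->
  forall s, 0 <= tmul m q A B s.
Proof.
move=> A0 B0 [|i s] //=; apply: sumr_ge0 => t _.
by rewrite mulr_ge0 ?prodr_ge0.
Qed.

Lemma tpow_ge0 m T k : (forall s, 0 <= T s) -> forall s, 0 <= tpow m T k s.
Proof. by move=> T0; elim: k => [|[|k] IH] //=; exact: tmul_ge0. Qed.

Lemma rowsum_tmul_le p m q A B i : (p - 1 = (m - 1) * (q - 1))%N ->
  rowsum p (tmul m q A B) i <=
  \sum_(t : (m - 1).-tuple 'I_n) `|A (i :: t)| * \prod_(j < m - 1) rowsum q B (tnth t j).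
Proof.
move=> e; rewrite /rowsum (sum_tuple_cast e (fun s => `|tmul m q A B (i :: s)|)).
rewrite -(sum_tmul m q (fun s => `|A s|) (fun s => `|B s|)).
apply: ler_sum => s _; apply: le_trans (ler_norm_sum _ _ _) _.
by apply: ler_sum => t _; rewrite normrM normr_prod.
Qed.

Lemma rowsum_tmul_nneg p m q A B i : (p - 1 = (m - 1) * (q - 1))%N ->
  (forall s, 0 <= A s) -> (forall s, 0 <= B s) ->
  rowsum p (tmul m q A B) i =
  \sum_(t : (m - 1).-tuple 'I_n) A (i :: t) * \prod_(j < m - 1) rowsum q B (tnth t j).
Proof.
move=> e A0 B0; rewrite rowsum_nneg; last exact: tmul_ge0.
rewrite (sum_tuple_cast e (fun s => tmul m q A B (i :: s))) sum_tmul.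
by under [RHS]eq_bigr do under eq_bigr do rewrite rowsum_nneg //.
Qed.

End RowSums.

Lemma tpowSS (R : nzRingType) n m (A : seq 'I_n -> R) k :
  tpow m A k.+2 = tmul m ((m - 1) ^ k.+1 + 1) A (tpow m A k.+1).
Proof. by []. Qed.

Local Open Scope nat_scope.

Lemma mu_geom m k : 2 <= m -> mu m k = \sum_(i < k) (m - 1) ^ i.
Proof.
rewrite /mu; case: eqP => [-> _|/eqP m_ne2 m_ge2].
  by rewrite (eq_bigr (fun=> 1)) => [|i _]; rewrite ?sum1_card ?card_ord ?exp1n.
have m2_gt0 : 0 < m - 2 by rewrite subn_gt0 ltn_neqAle eq_sym m_ne2.
by rewrite [_ ^ k - 1]subn1 predn_exp -subn1 -subnDA mulKn.
Qed.

Lemma muS m k : 2 <= m -> mu m k.+1 = 1 + (m - 1) * mu m k.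
Proof.
move=> m_ge2; rewrite !mu_geom // big_ord_recl expn0 big_distrr /=.
by congr (_ + _); apply: eq_bigr => i _; rewrite expnS.
Qed.

Lemma mu1 m : 2 <= m -> mu m 1 = 1.
Proof.
by move=> m_ge2; rewrite muS // /mu; case: eqP; rewrite ?expn0 ?subnn ?div0n muln0.
Qed.

Lemma tpow_order m k : (m - 1) ^ k.+1 + 1 - 1 = (m - 1) * ((m - 1) ^ k + 1 - 1).
Proof. by rewrite !addnK expnS. Qed.

Local Open Scope ring_scope.

Section PowerRowSums.
Variables (C : numDomainType) (n m : nat) (T : seq 'I_n -> C).
Hypothesis m_ge2 : (2 <= m)%N.

Lemma exp_muS (x : C) k : x ^+ mu m k.+1 = x * (x ^+ mu m k) ^+ (m - 1).
Proof. by rewrite muS // exprD expr1 mulnC exprM. Qed.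

Lemma rowsum_tpow1 i : rowsum ((m - 1) ^ 1 + 1) (tpow m T 1) i = rowsum m T i.
Proof. by apply: rowsum_cast; rewrite expn1 addnK. Qed.

Lemma rowsum_tpow_le k i : (0 < k)%N ->
  rowsum ((m - 1) ^ k + 1) (tpow m T k) i <= Rmax m T ^+ mu m k.
Proof.
elim: k i => [//|[|k] IH] i _.
  by rewrite rowsum_tpow1 mu1 // expr1 rowsum_le_Rmax.
rewrite tpowSS; apply: le_trans (rowsum_tmul_le _ _ _ (tpow_order m k.+1)) _.
rewrite exp_muS (le_trans (_ : _ <= rowsum m T i * (Rmax m T ^+ mu m k.+1) ^+ (m - 1))) //.
  rewrite /rowsum mulr_suml ler_sum // => t _; rewrite ler_wpM2l // ler_prod_exp // => j.
  by rewrite rowsum_ge0 IH.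
by rewrite ler_wpM2r ?exprn_ge0 ?Rmax_ge0 ?rowsum_le_Rmax.
Qed.

Lemma rowsum_tpow_ge k i : (0 < k)%N -> (forall s, 0 <= T s) ->
  rmin m T ^+ mu m k <= rowsum ((m - 1) ^ k + 1) (tpow m T k) i.
Proof.
move=> + T0; elim: k i => [//|[|k] IH] i _.
  by rewrite rowsum_tpow1 mu1 // expr1 rmin_le_rowsum.
rewrite tpowSS (rowsum_tmul_nneg _ (tpow_order m k.+1) T0 (tpow_ge0 _ _ T0)).
rewrite exp_muS (le_trans (_ : _ <= rowsum m T i * (rmin m T ^+ mu m k.+1) ^+ (m - 1))) //.
  by rewrite ler_wpM2r ?exprn_ge0 ?rmin_ge0 ?rmin_le_rowsum.
rewrite rowsum_nneg // mulr_suml ler_sum // => t _.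
by rewrite ler_wpM2l // ler_exp_prod ?exprn_ge0 ?rmin_ge0 // => j; exact: IH.
Qed.

End PowerRowSums.

Definition tapply (R : nzRingType) n p (T : seq 'I_n -> R) (x : 'I_n -> R) i : R :=
  \sum_(t : (p - 1).-tuple 'I_n) T (i :: t) * \prod_(j < p - 1) x (tnth t j).

Lemma sum_eq1_neq0 (R : nzRingType) (I : finType) (x : I -> R) :
  \sum_i x i = 1 -> exists i, x i != 0.
Proof.
move=> x1; apply/existsP; rewrite -negb_forall; apply/forallP => x_eq0.
by move: x1; rewrite big1 => [/eqP|i _]; [rewrite eq_sym oner_eq0 | exact/eqP/x_eq0].
Qed.

Section Eigenvalues.
Variables (C : numDomainType) (n p : nat).
Implicit Types (T : seq 'I_n -> C) (x : 'I_n -> C).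

Lemma subeigen_le_rowsum T x l : (forall s, 0 <= T s) -> (exists i, x i != 0) ->
  (forall i, l * `|x i| ^+ (p - 1) <= tapply p T (fun j => `|x j|) i) ->
  exists i, l <= rowsum p T i.
Proof.
move=> T0 [i0 xi0] sub.
have [i _ imax] :=
  @real_arg_maxP _ _ i0 xpredT (fun j => `|x j|) isT (fun j _ => normr_real _).
have xi_gt0 : 0 < `|x i| by rewrite (lt_le_trans _ (imax i0 isT)) ?normr_gt0.
exists i; rewrite -(ler_pM2r (exprn_gt0 (p - 1) xi_gt0)) (le_trans (sub i)) //.
rewrite rowsum_nneg // mulr_suml ler_sum // => t _.
by rewrite ler_wpM2l // ler_prod_exp // => j; rewrite normr_ge0; exact: imax.
Qed.

Lemma eigenvalue_le_rowsum T l : is_eigenvalue p T l -> exists i, `|l| <= rowsum p T i.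
Proof.
case=> x [x_nz eig].
have sub i : `|l| * `|x i| ^+ (p - 1) <= tapply p (fun s => `|T s|) (fun j => `|x j|) i.
  rewrite -normrX -normrM -eig (le_trans (ler_norm_sum _ _ _)) // ler_sum // => t _.
  by rewrite normrM normr_prod.
have [i li] := subeigen_le_rowsum (fun s => normr_ge0 (T s)) x_nz sub.
by exists i; rewrite (le_trans li) // /rowsum; under eq_bigr do rewrite normr_id.
Qed.

Lemma subeigen_le_Rmax T x l : (forall s, 0 <= T s) -> (forall j, 0 <= x j) ->
  \sum_j x j = 1 -> (forall j, l * x j ^+ (p - 1) <= tapply p T x j) -> l <= Rmax p T.
Proof.
move=> T0 x0 x1 sub; have normxE : (fun j => `|x j|) = x.
  by apply/funext => j; rewrite ger0_norm.
have [|i li] := subeigen_le_rowsum (l := l) T0 (sum_eq1_neq0 x1).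
  by move=> i; rewrite normxE ger0_norm.
exact: le_trans li (rowsum_le_Rmax _ _ _).
Qed.

End Eigenvalues.

Section Continuity.
Variables (K : numFieldType) (U : topologicalType).

Lemma continuous_sum (I : Type) (r : seq I) (P : pred I) (F : I -> U -> K) :
  (forall i, continuous (F i)) -> continuous (fun u => \sum_(i <- r | P i) F i u).
Proof. by move=> cF; apply: continuous_big => [|i _]; [exact: add_continuous | exact: cF]. Qed.

Lemma continuous_prod (I : Type) (r : seq I) (P : pred I) (F : I -> U -> K) :
  (forall i, continuous (F i)) -> continuous (fun u => \prod_(i <- r | P i) F i u).
Proof. by move=> cF; apply: continuous_big => [|i _]; [exact: mul_continuous | exact: cF]. Qed.

Lemma continuous_add (f g : U -> K) :
  continuous f -> continuous g -> continuous (fun u => f u + g u).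
Proof. by move=> cf cg u; exact: (continuousD (cf u) (cg u)). Qed.

Lemma continuous_sub (f g : U -> K) :
  continuous f -> continuous g -> continuous (fun u => f u - g u).
Proof. by move=> cf cg u; exact: (continuousB (cf u) (cg u)). Qed.

End Continuity.

Lemma near_right_ex (R : realFieldType) (x : R) (P : R -> Prop) :
  (\forall t \near x^'+, P t) -> exists2 t, x < t & P t.
Proof.
move=> xP; have [t [xt Pt]] := filter_ex (filterI (nbhs_right_gt x) xP).
by exists t.
Qed.

Lemma closed_le_fun (R : realFieldType) (U : topologicalType) (f g : U -> R) :
  continuous f -> continuous g -> closed [set u | f u <= g u].
Proof.
move=> cf cg; rewrite (_ : [set u | _] = (fun u => g u - f u) @^-1` [set x | 0 <= x]).
  by apply: preimage_closed; [move=> u _; exact: continuous_sub | exact: closed_ge].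
by rewrite predeqE => u /=; rewrite subr_ge0.
Qed.

Lemma closed_eq_fun (R : realFieldType) (U : topologicalType) (f : U -> R) c :
  continuous f -> closed [set u | f u = c].
Proof.
move=> cf; apply: (@preimage_closed _ _ f [set x | x = c]); last exact: closed_eq.
by move=> u _; exact: cf.
Qed.

Section PerronFrobenius.
Variables (R : realType) (n p : nat).
Hypotheses (n_gt0 : (0 < n)%N) (p_gt1 : (1 < p)%N).
Local Notation d := (p - 1)%N.
Implicit Types (T : seq 'I_n -> R) (x y : 'I_n -> R) (v : 'rV[R]_n * R).

Lemma tapplyZ T x c i : tapply p T (fun j => c * x j) i = c ^+ d * tapply p T x i.
Proof.
rewrite /tapply mulr_sumr; apply: eq_bigr => t _.
by rewrite big_split /= prodr_const card_ord mulrCA.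
Qed.

Lemma tapply_le T x y i : (forall s, 0 <= T s) -> (forall j, 0 <= x j <= y j) ->
  tapply p T x i <= tapply p T y i.
Proof. by move=> T0 xy; rewrite ler_sum // => t _; rewrite ler_wpM2l ?ler_prod. Qed.

Lemma tapply_lt T x y i0 i : (forall s, 0 < T s) -> (forall j, 0 <= x j <= y j) ->
  x i0 < y i0 -> tapply p T x i < tapply p T y i.
Proof.
move=> T0 xy lt_xy; rewrite -subr_gt0 /tapply -sumrB.
rewrite (bigD1 [tuple of nseq d i0]) //= ltr_pwDl //.
  rewrite -mulrBr mulr_gt0 // subr_gt0.
  under eq_bigr do rewrite tnth_nseq; under [X in _ < X]eq_bigr do rewrite tnth_nseq.
  rewrite !prodr_const card_ord ltrXn2r ?subn_eq0 -?ltnNge //.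
  by have /andP[] := xy i0.
rewrite sumr_ge0 // => t _; rewrite -mulrBr mulr_ge0 ?(ltW (T0 _)) // subr_ge0.
by rewrite ler_prod.
Qed.

Lemma fst_coord_continuous i : continuous (fun v : 'rV[R]_n * R => v.1 ord0 i).
Proof.
move=> v; apply: (@continuous_comp _ _ _ fst (fun x : 'rV[R]_n => x ord0 i)).
  exact: cvg_fst.
exact: coord_continuous.
Qed.

Lemma tapply_continuous T i :
  continuous (fun v : 'rV[R]_n * R => tapply p T (v.1 ord0) i).
Proof.
apply: continuous_sum => t v; apply: continuousM; first exact: cst_continuous.
by apply: continuous_prod => j; exact: fst_coord_continuous.
Qed.

Lemma eigenterm_continuous i :
  continuous (fun v : 'rV[R]_n * R => v.2 * v.1 ord0 i ^+ d).
Proof.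
move=> v; apply: continuousM; first exact: cvg_snd.
apply: (@continuous_comp _ _ _ (fun v : 'rV[R]_n * R => v.1 ord0 i) (fun x : R => x ^+ d)).
  exact: fst_coord_continuous.
exact: exprn_continuous.
Qed.

Definition box (a b : R) : set ('rV[R]_n * R) :=
  [set x : 'rV[R]_n | forall i, `[0, 1]%classic (x ord0 i)] `*` `[a, b]%classic.

Lemma box_compact a b : compact (box a b).
Proof.
apply: compact_setX; last exact: segment_compact.
by have := @rV_compact R n (fun=> `[0, 1]%classic); apply => i; exact: segment_compact.
Qed.

Lemma in_box a b x l :
  (forall j, 0 <= x j <= 1) -> a <= l <= b -> box a b (\row_j x j, l).
Proof. by move=> x01 lab; split => [j|] /=; rewrite ?mxE in_itv; [exact: x01 | exact: lab]. Qed.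

Lemma subeigen_bump T x l i0 : (forall s, 0 < T s) -> (forall j, 0 <= x j) ->
  (forall j, l * x j ^+ d <= tapply p T x j) -> l * x i0 ^+ d < tapply p T x i0 ->
  exists y, [/\ forall j, 0 <= y j, 0 < y i0 & forall j, l * y j ^+ d < tapply p T y j].
Proof.
move=> T0 x0 sub lt_i0.
have [t xt lt_t] : exists2 t, x i0 < t & l * t ^+ d < tapply p T x i0.
  apply: near_right_ex; apply: cvgr_lt lt_i0; apply: cvg_at_right_filter.
  by apply: cvgMl_tmp; exact: exprn_continuous.
pose y j := if j == i0 then t else x j.
have xy j : 0 <= x j <= y j by rewrite x0 /y /=; case: eqP => [->|_] //; exact: ltW.
have lt_xy : x i0 < y i0 by rewrite /y eqxx.
exists y; split => [j||j]; first by case/andP: (xy j) => /le_trans; apply.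
  exact: le_lt_trans (x0 i0) lt_xy.
have [->|ne] := eqVneq j i0.
  by rewrite {1}/y eqxx (lt_le_trans lt_t) // tapply_le // => s; exact: ltW.
by rewrite {1}/y (negPf ne) (le_lt_trans (sub j)) // (tapply_lt j T0 xy lt_xy).
Qed.

Lemma subeigen_raise T y l : (forall j, 0 <= y j) -> 0 < \sum_j y j ->
  (forall j, l * y j ^+ d < tapply p T y j) ->
  exists l' z, [/\ l < l', forall j, 0 <= z j, \sum_j z j = 1 &
                   forall j, l' * z j ^+ d <= tapply p T z j].
Proof.
move=> y0 sy_gt0 lt_y.
have [l' ll' lt_l'] : exists2 l', l < l' & forall j, l' * y j ^+ d < tapply p T y j.
  apply: near_right_ex; apply: filter_forall => j; apply: cvgr_lt (lt_y j).
  by apply: cvg_at_right_filter; apply: cvgM; [exact: cvg_id | exact: cvg_cst].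
pose c := (\sum_j y j)^-1.
exists l', (fun j => c * y j); split => // [j||j].
- by rewrite mulr_ge0 ?y0 // invr_ge0 ltW.
- by rewrite -mulr_sumr mulVf ?gt_eqF.
by rewrite tapplyZ exprMn mulrCA ler_wpM2l ?exprn_ge0 ?invr_ge0 ?ltW ?lt_l'.
Qed.

Lemma positive_tensor_eigenpair T r : (forall s, 0 < T s) -> 0 <= r ->
  (forall i, r <= rowsum p T i) ->
  exists l x, [/\ r <= l <= Rmax p T, forall j, 0 <= x j, \sum_j x j = 1 &
                  forall j, tapply p T x j = l * x j ^+ d].
Proof.
move=> T_gt0 r0 rT; have T0 s : 0 <= T s := ltW (T_gt0 s).
pose K := box 0 (Rmax p T) `&` ([set v : 'rV_n * R | \sum_i v.1 ord0 i = 1] `&`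
  \bigcap_i [set v : 'rV_n * R | v.2 * v.1 ord0 i ^+ d <= tapply p T (v.1 ord0) i]).
have inK x l : (forall j, 0 <= x j) -> \sum_j x j = 1 -> 0 <= l ->
    (forall j, l * x j ^+ d <= tapply p T x j) -> K (\row_j x j, l).
  move=> x0 x1 l0 sub; have xE : (\row_j x j) ord0 = x by apply/funext => j; rewrite mxE.
  split; last by split => [|i _] /=; rewrite xE.
  apply: in_box; last by rewrite l0 (subeigen_le_Rmax T0 x0 x1 sub).
  by move=> j; rewrite x0 -x1 (bigD1 j) //= lerDl sumr_ge0.
have cK : compact K.
  apply: compact_closedI; first exact: box_compact.
  apply: closedI.
    by apply: closed_eq_fun; apply: continuous_sum => i; exact: fst_coord_continuous.
  apply: closed_bigI => i _.
  by apply: closed_le_fun; [exact: eigenterm_continuous | exact: tapply_continuous].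
pose u := fun _ : 'I_n => (n%:R : R)^-1.
have uK : K (\row_j u j, r).
  apply: inK => //.
  - by move=> j; rewrite invr_ge0.
  - by rewrite sumr_const card_ord -[_ *+ n]mulr_natr mulVf ?pnatr_eq0 -?lt0n.
  move=> j; rewrite (le_trans (ler_wpM2r (exprn_ge0 _ _) (rT j))) ?invr_ge0 //.
  by rewrite rowsum_nneg // /tapply /u mulr_suml ler_sum // => t _; rewrite prodr_const card_ord.
have snd_cont : {within K, continuous (fun v : 'rV_n * R => v.2)}.
  by apply: continuous_subspaceT => v; exact: cvg_snd.
have [c /set_mem [c_box [/= c1 c_sub]] cmax] :=
  compact_EVT_max (ex_intro _ _ uK) cK snd_cont.
move: c_box => [/= c01 c_l]; rewrite in_itv /= in c_l; case/andP: c_l => l0 lR.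
have c0 j : 0 <= c.1 ord0 j by have := c01 j; rewrite /= in_itv => /andP[].
exists c.2, (c.1 ord0); split => // [|i0].
  by rewrite lR andbT (cmax _ (mem_set uK)).
(* A strict inequality at i0 would yield a point of K with a larger lambda. *)
apply/eqP; rewrite eq_le (c_sub i0 I) andbT; apply: contraT; rewrite -ltNge => lt_i0.
have [y [y0 yi0 lt_y]] := subeigen_bump T_gt0 c0 (fun j => c_sub j I) lt_i0.
have [|l' [z [ll' z0 z1 subz]]] := subeigen_raise y0 _ lt_y.
  by rewrite (lt_le_trans yi0) // (bigD1 i0) //= lerDl sumr_ge0.
have /mem_set/cmax /= := inK z l' z0 z1 (le_trans l0 (ltW ll')) subz.
by rewrite leNgt ll'.
Qed.

Local Notation ntuples := (\sum_(t : d.-tuple 'I_n) (1 : R)).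

Lemma perturbed_eigenpair T r e : (forall s, 0 <= T s) -> 0 <= r ->
  (forall i, r <= rowsum p T i) -> 0 < e <= 1 ->
  exists x l, [/\ forall j, 0 <= x j <= 1, r <= l <= Rmax p T + ntuples, \sum_j x j = 1 &
                  forall j, `|tapply p T x j - l * x j ^+ d| <= e * ntuples].
Proof.
move=> T0 r0 rT /andP[e_gt0 e_le1]; have e0 : 0 <= e := ltW e_gt0.
have N0 : 0 <= ntuples by rewrite sumr_ge0.
pose Te s := T s + e; have Te_gt0 s : 0 < Te s by rewrite ltr_wpDl.
have rowsumTe i : rowsum p Te i = rowsum p T i + e * ntuples.
  by rewrite !rowsum_nneg // => [|s]; rewrite ?ltW // /Te big_split /= mulr_sumr mulr1.
have rTe i : r <= rowsum p Te i by rewrite rowsumTe (le_trans (rT i)) // lerDl mulr_ge0.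
have [l [x [/andP[rl lR] x0 x1 eig]]] := positive_tensor_eigenpair Te_gt0 r0 rTe.
have x01 j : 0 <= x j <= 1 by rewrite x0 -x1 (bigD1 j) //= lerDl sumr_ge0.
exists x, l; split => // [|j].
  rewrite rl (le_trans lR) //; apply: bigmax_le => [|i _]; first by rewrite addr_ge0 ?Rmax_ge0.
  by rewrite rowsumTe lerD ?rowsum_le_Rmax // ler_piMl.
have -> : tapply p T x j - l * x j ^+ d = - (e * \sum_t \prod_(k < d) x (tnth t k)).
  rewrite -eig /tapply /Te mulr_sumr -sumrB -sumrN; apply: eq_bigr => t _.
  by rewrite mulrDl opprD addrA subrr sub0r.
rewrite normrN ger0_norm ?(mulr_ge0 e0) ?sumr_ge0 // => [|t _]; last exact: prodr_ge0.
rewrite ler_wpM2l // ler_sum // => t _.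
by have := @ler_prod_exp _ _ (fun k => x (tnth t k)) 1 (fun k => x01 _); rewrite expr1n.
Qed.

Definition residual T (v : 'rV[R]_n * R) : R :=
  \sum_i `|tapply p T (v.1 ord0) i - v.2 * v.1 ord0 i ^+ d| + `|\sum_i v.1 ord0 i - 1|.

Lemma residual_continuous T : continuous (residual T).
Proof.
apply: continuous_add.
  apply: continuous_sum => i v; apply: cvg_norm; apply: continuous_sub v.
    exact: tapply_continuous.
  exact: eigenterm_continuous.
move=> v; apply: cvg_norm; apply: continuous_sub v; last exact: cst_continuous.
by apply: continuous_sum => i; exact: fst_coord_continuous.
Qed.

Lemma residual_eq0 T v : residual T v = 0 ->
  \sum_i v.1 ord0 i = 1 /\ forall j, tapply p T (v.1 ord0) j = v.2 * v.1 ord0 j ^+ d.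
Proof.
move/eqP; rewrite paddr_eq0 ?sumr_ge0 //.
case/andP=> /eqP/psumr_eq0P eig0; rewrite normr_eq0 subr_eq0 => /eqP v1.
by split => // j; apply/eqP; rewrite -subr_eq0 -normr_eq0 eig0.
Qed.

Lemma nonneg_tensor_eigenpair T r : (forall s, 0 <= T s) -> 0 <= r ->
  (forall i, r <= rowsum p T i) ->
  exists l x, [/\ r <= l, exists i, x i != 0 & forall j, tapply p T x j = l * x j ^+ d].
Proof.
move=> T0 r0 rT; pose Lam := Rmax p T + ntuples.
have [|x [l [x01 rl _ _]]] := perturbed_eigenpair T0 r0 rT (e := 1); first by rewrite ltr01 lexx.
have cont : {within box r Lam, continuous (residual T)}.
  by apply: continuous_subspaceT; exact: residual_continuous.
have [c /set_mem [_ /= c_l] cmin] :=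
  compact_EVT_min (ex_intro _ _ (in_box x01 rl)) (@box_compact r Lam) cont.
suff /residual_eq0 [c1 eig] : residual T c = 0.
  move: c_l; rewrite in_itv /= => /andP[rc _].
  by exists c.2, (c.1 ord0); split => //; exact: sum_eq1_neq0.
apply/eqP; rewrite eq_le addr_ge0 ?sumr_ge0 // andbT; apply: contraT; rewrite -ltNge => g_gt0.
have [e e_gt0 [e_le1 eg]] : exists2 e, 0 < e & e <= 1 /\ n%:R * (e * ntuples) < residual T c.
  apply: near_right_ex; apply: filterI; first exact: nbhs_right_le ltr01.
  have g_gt0' : n%:R * (0 * ntuples) < residual T c by rewrite mul0r mulr0.
  apply: (@cvgr_lt _ _ 0^'+ _ (fun e => n%:R * (e * ntuples)) _ _ _ g_gt0').
  by apply: cvg_at_right_filter; apply: cvgMl_tmp; apply: cvgMr_tmp; exact: cvg_id.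
have [|y [l' [y01 rl' y1 res]]] := perturbed_eigenpair T0 r0 rT (e := e); first by rewrite e_gt0.
have := cmin _ (mem_set (in_box y01 rl')).
have yE : (\row_j y j) ord0 = y by apply/funext => j; rewrite mxE.
rewrite /residual /= yE y1 subrr normr0 addr0 => le_c.
suff : residual T c < residual T c by rewrite ltxx.
apply: le_lt_trans le_c (le_lt_trans _ eg); apply: le_trans (ler_sum _ (fun i _ => res i)) _.
by rewrite sumr_const card_ord mulr_natl.
Qed.

End PerronFrobenius.

Lemma is_eigenvalue_rmorph (F : fieldType) (K : nzRingType) (f : {rmorphism F -> K})
    n p (T : seq 'I_n -> F) l :
  is_eigenvalue p T l -> is_eigenvalue p (f \o T) (f l).
Proof.
case=> x [[i xi] eig]; exists (f \o x); split; first by exists i; rewrite /= fmorph_eq0.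
move=> j; rewrite -rmorphXn -rmorphM -eig rmorph_sum; apply: eq_bigr => t _.
by rewrite rmorphM rmorph_prod.
Qed.

Lemma nonneg_tensor_eigenvalue_ge (R : realType) n p (T : seq 'I_n -> R[i]) r :
  (0 < n)%N -> (1 < p)%N -> (forall s, 0 <= T s) -> 0 <= r ->
  (forall i, r <= rowsum p T i) -> exists l, is_eigenvalue p T l /\ r <= `|l|.
Proof.
move=> n_gt0 p_gt1 T0 r0 rT.
pose TR s := complex.Re (T s).
have TE s : (TR s)%:C%C = T s by rewrite RRe_real ?ger0_real.
have TR0 s : 0 <= TR s by rewrite -ler0c TE.
have rE : (complex.Re r)%:C%C = r by rewrite RRe_real ?ger0_real.
have rTR i : complex.Re r <= rowsum p TR i.
  rewrite -lecR rE (le_trans (rT i)) // !rowsum_nneg // rmorph_sum /=.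
  by under [X in _ <= X]eq_bigr do rewrite TE.
have r0R : 0 <= complex.Re r by rewrite -ler0c rE.
have [l [x [rl x_nz eig]]] := nonneg_tensor_eigenpair n_gt0 p_gt1 TR0 r0R rTR.
exists l%:C%C; split; last by rewrite ger0_norm ?ler0c ?(le_trans r0R) // -rE lecR.
have -> : T = real_complex R \o TR by apply/funext => s; rewrite /= TE.
by apply: is_eigenvalue_rmorph; exists x.
Qed.

Theorem corollary4p2 (R : realType) (m n k : nat) (A : m.-tuple 'I_n -> R[i]) :
  (2 <= m)%N -> (1 <= n)%N -> (1 <= k)%N ->
  (forall l : R[i],
      is_eigenvalue ((m - 1) ^ k + 1)%N (tpow m (of_tuple A) k) l ->
      `|l| <= Rmax m (of_tuple A) ^+ mu m k)
  /\
  ((forall t : m.-tuple 'I_n, 0 <= A t) ->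
     (exists l : R[i],
        is_eigenvalue ((m - 1) ^ k + 1)%N (tpow m (of_tuple A) k) l /\
        rmin m (of_tuple A) ^+ mu m k <= `|l|)
     /\
     (forall l : R[i],
        is_eigenvalue ((m - 1) ^ k + 1)%N (tpow m (of_tuple A) k) l ->
        `|l| <= Rmax m (of_tuple A) ^+ mu m k)).
Proof.
move=> m_ge2 n_gt0 k_gt0.
have upper l : is_eigenvalue ((m - 1) ^ k + 1) (tpow m (of_tuple A) k) l ->
    `|l| <= Rmax m (of_tuple A) ^+ mu m k.
  by case/eigenvalue_le_rowsum => i /le_trans; apply; exact: rowsum_tpow_le.
split=> // A0; split=> //.
have A0' s : 0 <= of_tuple A s by rewrite /of_tuple; case: insubP.
apply: nonneg_tensor_eigenvalue_ge => //.
- by rewrite addn1 ltnS expn_gt0 subn_gt0 m_ge2.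
- exact: tpow_ge0.
- by rewrite exprn_ge0 ?rmin_ge0.
by move=> i; exact: rowsum_tpow_ge.
Qed.
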